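(* If $F(z,t)=\sum_{n\ge1}\sum_{m\ge0}a_{n,m}z^nt^m$ is very nice, then $\mathcal N F(z,t)$ is nice.
   Context: A bivariate series $F(z,t)$ is nice if $F(z,z^k)$ is a rational function of $z$ for every integer $k\ge0$; it is very nice if it is nice and $F(z,0)$ is also rational. For $G(z,t)=\sum_{n\ge1}\sum_{m\ge0}a_{n,m}z^nt^m$, $\mathcal N G(z,t)=G(z,0)+\sum_{n\ge1}\sum_{m\ge1}a_{n,m}\frac{1}{1-z^m}\cdot\frac{1-(tz)^m}{1-tz}z^n$. *)

From HB Require Import structures.
From mathcomp Require Import all_boot all_order all_algebra.
Set Implicit Arguments. Unset Strict Implicit. Unset Printing Implicit Defensive.
Import Order.TTheory GRing.Theory Num.Theory.
Local Open Scope ring_scope.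

(* A univariate formal power series in z over K: its coefficient sequence. *)
(* A bivariate series F(z,t) in K[t][[z]] is represented by
   F : nat -> {poly K}, F n = coefficient of z^n (a polynomial in t). *)

(* f is (the expansion of) a rational function of z: f * Q = P for some
   polynomials P, Q with Q <> 0 (coefficientwise Cauchy product). *)
Definition rational_series (K : fieldType) (f : nat -> K) : Prop :=
  exists P Q : {poly K}, Q != 0 /\
    forall N : nat, \sum_(i < N.+1) Q`_i * f (N - i)%N = P`_N.

(* Coefficients of F(z, z^k) = sum_n z^n (F n)(z^k). *)
Definition subst_pow (K : fieldType) (F : nat -> {poly K}) (k : nat) : nat -> K :=
  fun N => \sum_(i < N.+1) ((F i) \Po 'X^k)`_(N - i)%N.

(* Coefficients of F(z,0). *)
Definition at_t0 (K : fieldType) (F : nat -> {poly K}) : nat -> K :=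
  fun N => (F N)`_0.

Definition nice (K : fieldType) (F : nat -> {poly K}) : Prop :=
  forall k : nat, rational_series (subst_pow F k).

Definition very_nice (K : fieldType) (F : nat -> {poly K}) : Prop :=
  nice F /\ rational_series (at_t0 F).

(* The operator N:
   N G(z,t) = G(z,0) + sum_{n>=1,m>=1} a_{n,m} z^n/(1-z^m) (1-(tz)^m)/(1-tz)
            = G(z,0) + sum_{n,m>=1} sum_{i>=0} sum_{j<m} a_{n,m} t^j z^(n+m*i+j). *)
Definition NOp (K : fieldType) (G : nat -> {poly K}) : nat -> {poly K} :=
  fun N => ((G N)`_0)%:P +
    \sum_(1 <= n < N.+1) \sum_(1 <= m < size (G n)) \sum_(i < N.+1) \sum_(j < m)
      (if (n + m * i + j == N)%N then (G n)`_m *: 'X^j else 0).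

From HB Require Import structures.
From mathcomp Require Import all_boot all_order all_algebra.
From mathcomp Require Import zify ring.
Set Implicit Arguments. Unset Strict Implicit.
Import GRing.Theory.
Local Open Scope ring_scope.

(* Since
     1/(1-z^m) * (1-z^{(k+1)m})/(1-z^{k+1}) = 1/(1-z^{k+1}) * sum_{l<=k} z^{ml},
   substituting t = z^k into N F gives the identity of series in z
     (1 - z^{k+1}) (N F(z,z^k) - F(z,0)) = sum_{l<=k} (F(z,z^l) - F(z,0)).
   The right-hand side is rational because F is very nice, and rational
   series are closed under sums and under division by a nonzero polynomial;
   hence N F(z,z^k) is rational for every k. *)

Section Convolution.
Variable K : fieldType.
Implicit Types (f g : nat -> K) (p q : {poly K}).

Definition conv p f : nat -> K := fun N => \sum_(i < N.+1) p`_i * f (N - i)%N.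

Lemma conv_eq p f g : (forall j, f j = g j) -> forall N, conv p f N = conv p g N.
Proof. by move=> fg N; apply: eq_bigr => i _; rewrite fg. Qed.

Lemma coefM_ext p (h1 h2 : {poly K}) N :
  (forall j, (j <= N)%N -> h1`_j = h2`_j) -> (p * h1)`_N = (p * h2)`_N.
Proof.
by move=> h12; rewrite !coefMr; apply: eq_bigr => i _; rewrite h12 // -ltnS.
Qed.

Lemma conv_ext p f (h : {poly K}) N :
  (forall j, (j <= N)%N -> f j = h`_j) -> conv p f N = (p * h)`_N.
Proof.
move=> fh; rewrite (_ : conv p f N = (p * \poly_(i < N.+1) f i)`_N).
  by apply: coefM_ext => j le_jN; rewrite coef_poly ltnS le_jN fh.
by rewrite coefM; apply: eq_bigr => i _; rewrite coef_poly ltnS leq_subr.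
Qed.

Lemma conv_mul p q f N : conv (p * q) f N = conv p (conv q f) N.
Proof.
rewrite (@conv_ext p (conv q f) (q * \poly_(i < N.+1) f i)).
  by rewrite mulrA (@conv_ext _ _ (\poly_(i < N.+1) f i)) // => j;
     rewrite coef_poly ltnS => ->.
move=> j le_jN; apply: conv_ext => i le_ij.
by rewrite coef_poly ltnS (leq_trans le_ij le_jN).
Qed.

Lemma conv_add p f g N : conv p (fun n => f n + g n) N = conv p f N + conv p g N.
Proof. by rewrite /conv -big_split; apply: eq_bigr => i _; rewrite mulrDr. Qed.

Lemma conv_scale p c f N : conv p (fun n => c * f n) N = c * conv p f N.
Proof. by rewrite /conv mulr_sumr; apply: eq_bigr => i _; rewrite mulrCA. Qed.

Lemma conv_coef p (P : {poly K}) N : conv p (fun n => P`_n) N = (p * P)`_N.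
Proof. by rewrite coefM. Qed.

End Convolution.

Section RationalSeries.
Variable K : fieldType.
Implicit Types (f g : nat -> K).

Lemma rat_ext f g : (forall n, f n = g n) -> rational_series f -> rational_series g.
Proof.
move=> fg [P [Q [nzQ QfP]]]; exists P, Q; split=> // N.
by rewrite -[LHS]/(conv Q g N) -(conv_eq Q fg); apply: QfP.
Qed.

Lemma rat_add f g : rational_series f -> rational_series g ->
  rational_series (fun n => f n + g n).
Proof.
move=> [P1 [Q1 [nzQ1 Q1f]]] [P2 [Q2 [nzQ2 Q2g]]].
exists (Q2 * P1 + Q1 * P2), (Q1 * Q2); split; first by rewrite mulf_neq0.
move=> N; rewrite -[LHS]/(conv (Q1 * Q2) (fun n => f n + g n) N) conv_add coefD.
congr (_ + _); last by rewrite conv_mul (conv_eq _ Q2g) conv_coef.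
by rewrite mulrC conv_mul (conv_eq _ Q1f) conv_coef.
Qed.

Lemma rat_scale c f : rational_series f -> rational_series (fun n => c * f n).
Proof.
move=> [P [Q [nzQ QfP]]]; exists (c *: P), Q; split=> // N.
by rewrite -[LHS]/(conv Q (fun n => c * f n) N) conv_scale coefZ -QfP.
Qed.

Lemma rat_sub f g : rational_series f -> rational_series g ->
  rational_series (fun n => f n - g n).
Proof.
move=> rf rg; apply: (rat_ext _ (rat_add rf (rat_scale (-1) rg))) => n.
by rewrite mulN1r.
Qed.

Lemma rat0 : rational_series (fun _ : nat => (0 : K)).
Proof.
exists 0, 1; split; first exact: oner_neq0.
by move=> N; rewrite coef0 big1 // => i _; rewrite mulr0.
Qed.

Lemma rat_sum (h : nat -> nat -> K) k : (forall l, rational_series (h l)) ->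
  rational_series (fun n => \sum_(l < k) h l n).
Proof.
move=> rh; elim: k => [|k IHk].
  by apply: (rat_ext _ rat0) => n; rewrite big_ord0.
by apply: (rat_ext _ (rat_add IHk (rh k))) => n; rewrite big_ord_recr.
Qed.

Lemma rat_div (p : {poly K}) f : p != 0 -> rational_series (conv p f) ->
  rational_series f.
Proof.
move=> nzp [P [Q [nzQ QpfP]]]; exists P, (Q * p); split; first by rewrite mulf_neq0.
by move=> N; rewrite -[LHS]/(conv (Q * p) f N) conv_mul; apply: QpfP.
Qed.

End RationalSeries.

Section FiniteSums.
Variable V : nmodType.

Lemma sum_widen_nat (G : nat -> V) m n1 n2 : (n1 <= n2)%N ->
  (forall i, (n1 <= i < n2)%N -> G i = 0) ->
  \sum_(m <= i < n1) G i = \sum_(m <= i < n2) G i.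
Proof.
move=> le_n12 G0; rewrite (big_nat_widen _ _ _ _ _ le_n12) [RHS]big_mkcond /=.
rewrite big_mkcond /=; apply: eq_big_nat => i /andP[_ lt_i].
by case: ifP => // /negbT; rewrite -leqNgt => le_i; rewrite G0 // le_i lt_i.
Qed.

Lemma sum_widen_ord (G : nat -> V) n1 n2 : (n1 <= n2)%N ->
  (forall i, (n1 <= i < n2)%N -> G i = 0) ->
  \sum_(i < n1) G i = \sum_(i < n2) G i.
Proof. by move=> le_n12 G0; rewrite -!(big_mkord xpredT); apply: sum_widen_nat. Qed.

Lemma sum4_widen (E : nat -> nat -> nat -> nat -> V) (sz : nat -> nat) a M :
  (a < M)%N ->
  (forall n m i j, (1 <= m)%N -> (a < n + m * i)%N -> E n m i j = 0) ->
  \sum_(1 <= n < a.+1) \sum_(1 <= m < sz n) \sum_(i < a.+1) \sum_(j < m) E n m i j =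
  \sum_(1 <= n < M) \sum_(1 <= m < sz n) \sum_(i < M) \sum_(j < m) E n m i j.
Proof.
move=> lt_aM E0.
transitivity (\sum_(1 <= n < a.+1) \sum_(1 <= m < sz n) \sum_(i < M)
               \sum_(j < m) E n m i j).
  apply: eq_big_nat => n /andP[n_gt0 _]; apply: eq_big_nat => m /andP[m_gt0 _].
  apply: (sum_widen_ord (G := fun i => \sum_(j < m) E n m i j)) => // i /andP[i_gt _].
  by apply: big1 => j _; apply: E0 => //; have := leq_pmull i m_gt0; lia.
apply: (sum_widen_nat (G := fun n => \sum_(1 <= m < sz n) \sum_(i < M)
          \sum_(j < m) E n m i j)) => // n /andP[n_gt _].
apply: big1_seq => m /andP[_]; rewrite mem_index_iota => /andP[m_gt0 _].
by apply: big1 => i _; apply: big1 => j _; apply: E0 => //; lia.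
Qed.

Lemma sum_pick N (c d : nat) (x : V) :
  \sum_(i' < N.+1) (if (c == (i' : nat))%N && (d == N - i')%N then x else 0) =
  if (c + d == N)%N then x else 0.
Proof.
have [/eqP cdN|ncdN] := boolP (c + d == N)%N.
  have lt_cN : (c < N.+1)%N by lia.
  rewrite (bigD1 (Ordinal lt_cN)) //= eqxx (_ : d == N - c)%N; last by apply/eqP; lia.
  rewrite big1 ?addr0 // => i' ne_i'c.
  by case: (c =P i') => //= ci'; move: ne_i'c; rewrite -val_eqE /= ci' eqxx.
apply: big1 => i' _; case: (c =P i') => //= ci'; case: (d =P (N - i')%N) => //= di'.
by move: ncdN; have := ltn_ord i'; lia.
Qed.

End FiniteSums.

Section Coefficients.
Variable K : fieldType.

Lemma coef_ZXn (a : K) e d : (a *: 'X^e)`_d = if (e == d)%N then a else 0.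
Proof. by rewrite coefZ coefXn eq_sym; case: eqP => _; rewrite ?mulr1 ?mulr0. Qed.

Lemma coef_compXn (p : {poly K}) l d :
  (p \Po 'X^l)`_d = \sum_(m < size p) (if (l * m == d)%N then p`_m else 0).
Proof.
rewrite coef_comp_poly; apply: eq_bigr => m _; rewrite -exprM coefXn eq_sym.
by case: eqP => _; rewrite ?mulr1 ?mulr0.
Qed.

Lemma sum_last (G : nat -> K) N :
  \sum_(i < N.+1) (if (0 == N - i)%N then G i else 0) = G N.
Proof.
rewrite big_ord_recr /= subnn eqxx big1 ?add0r // => i _.
by rewrite ifF //; apply/eqP; have := ltn_ord i; lia.
Qed.

Lemma sum_split0 (p : {poly K}) (P : pred nat) :
  \sum_(m < size p) (if P m then p`_m else 0) =
  (if P 0%N then p`_0 else 0) + \sum_(1 <= m < size p) (if P m then p`_m else 0).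
Proof.
case sz_p: (size p) => [|s].
  by rewrite big_ord0 big_geq // nth_default ?sz_p // if_same addr0.
by rewrite -(big_mkord xpredT (fun m => if P m then p`_m else 0)) big_ltn.
Qed.

Variable F : nat -> {poly K}.
Hypothesis F0 : F 0%N = 0.

Lemma subst_pow_coef l N : subst_pow F l N - at_t0 F N =
  \sum_(1 <= n < N.+1) \sum_(1 <= m < size (F n))
     (if (n + m * l == N)%N then (F n)`_m else 0).
Proof.
rewrite /subst_pow.
under eq_bigr => i _ do
  rewrite coef_compXn (sum_split0 _ (fun m => l * m == N - i)%N) /= muln0.
rewrite big_split /= (sum_last (fun i => (F i)`_0)) /at_t0 addrAC subrr add0r.
rewrite -(big_mkord xpredT (fun i => \sum_(1 <= m < size (F i))
          (if (l * m == N - i)%N then (F i)`_m else 0))).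
rewrite big_ltn // F0 size_poly0 [X in X + _]big_geq // add0r.
apply: eq_big_nat => n /andP[_ lt_nN]; apply: eq_bigr => m _.
suff -> : (l * m == N - n)%N = (n + m * l == N)%N by [].
by apply/idP/idP => /eqP e; apply/eqP; lia.
Qed.

Lemma coef_NOp_comp k i' d : ((NOp F i') \Po 'X^k)`_d =
  (if (0 == d)%N then (F i')`_0 else 0) +
  \sum_(1 <= n < i'.+1) \sum_(1 <= m < size (F n)) \sum_(i < i'.+1) \sum_(j < m)
     (if (n + m * i + j == i')%N && (k * j == d)%N then (F n)`_m else 0).
Proof.
rewrite /NOp comp_polyD comp_polyC coefD coefC eq_sym; congr (_ + _).
rewrite -[_ \Po _]/(comp_poly _ _) raddf_sum coef_sum; apply: eq_bigr => n _.
rewrite raddf_sum coef_sum; apply: eq_bigr => m _.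
rewrite raddf_sum coef_sum; apply: eq_bigr => i _.
rewrite raddf_sum coef_sum; apply: eq_bigr => j _.
case: ifP => _ /=; last by rewrite raddf0 coef0.
by rewrite comp_polyZ comp_Xn_poly -exprM coef_ZXn.
Qed.

(* Coefficient of z^N in N F(z,z^k) - F(z,0): each a_{n,m} t^j z^{n+mi+j}
   contributes to z^{n + m i + (k+1) j}.  The ranges may be taken up to any
   M > N. *)
Lemma subst_pow_NOp_coef k N M : (N < M)%N ->
  subst_pow (NOp F) k N - at_t0 F N =
  \sum_(1 <= n < M) \sum_(1 <= m < size (F n)) \sum_(i < M) \sum_(j < m)
     (if (n + m * i + k.+1 * j == N)%N then (F n)`_m else 0).
Proof.
move=> lt_NM; rewrite /subst_pow.
under eq_bigr => i' _ do rewrite coef_NOp_comp.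
rewrite big_split /= (sum_last (fun i => (F i)`_0)) /at_t0 addrAC subrr add0r.
pose E i' n m i j := if (n + m * i + j == i')%N && (k * j == N - i')%N
                     then (F n)`_m else 0.
rewrite (eq_bigr (fun i' : 'I_N.+1 => \sum_(1 <= n < M) \sum_(1 <= m < size (F n))
            \sum_(i < M) \sum_(j < m) E i' n m i j)); last first.
  move=> i' _; apply: (sum4_widen (E := E i')); first by have := ltn_ord i'; lia.
  by move=> n m i j _ lt_i'; rewrite /E ifF //; apply/andP => -[/eqP ? _]; lia.
rewrite exchange_big; apply: eq_bigr => n _.
rewrite exchange_big; apply: eq_bigr => m _.
rewrite exchange_big; apply: eq_bigr => i _.
rewrite exchange_big; apply: eq_bigr => j _.
by rewrite sum_pick mulSn addnA.
Qed.

Definition NOp_trunc k M : {poly K} :=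
  \sum_(1 <= n < M) \sum_(1 <= m < size (F n)) \sum_(i < M) \sum_(j < m)
     (F n)`_m *: 'X^(n + m * i + k.+1 * j).

Lemma coef_NOp_trunc k M N : (N < M)%N ->
  (NOp_trunc k M)`_N = subst_pow (NOp F) k N - at_t0 F N.
Proof.
move=> lt_NM; rewrite (subst_pow_NOp_coef k lt_NM) coef_sum.
apply: eq_bigr => n _; rewrite coef_sum; apply: eq_bigr => m _.
rewrite coef_sum; apply: eq_bigr => i _; rewrite coef_sum; apply: eq_bigr => j _.
exact: coef_ZXn.
Qed.

End Coefficients.

Lemma mul_one_sub_geom (R : pzRingType) (x : R) n :
  (1 - x) * \sum_(i < n) x ^+ i = 1 - x ^+ n.
Proof. by rewrite -opprB mulNr -subrX1 opprB. Qed.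

(* The core identity for one monomial a z^n t^m of F (m >= 1):
     (1 - z^d) z^n/(1-z^m) (1-z^{dm})/(1-z^d) = z^n sum_{l<d} z^{ml} / (1-z^m)
   and both sides agree with z^n sum_{l<d} z^{ml} below degree M, where the
   geometric series in z^m, z^d are truncated to M and m terms. *)
Lemma coef_geom_double_sum (K : fieldType) (a : K) (n m d M N : nat) :
  (1 <= m)%N -> (N < M)%N ->
  ((1 - 'X^d) * \sum_(i < M) \sum_(j < m) a *: 'X^(n + m * i + d * j))`_N =
  (\sum_(l < d) a *: 'X^(n + m * l))`_N.
Proof.
move=> m_gt0 lt_NM.
pose x : {poly K} := 'X^m; pose y : {poly K} := 'X^d.
have -> : \sum_(i < M) \sum_(j < m) a *: 'X^(n + m * i + d * j) =
    a *: ('X^n * ((\sum_(i < M) x ^+ i) * (\sum_(j < m) y ^+ j))).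
  rewrite mulr_suml mulr_sumr scaler_sumr; apply: eq_bigr => i _.
  rewrite mulr_sumr mulr_sumr scaler_sumr; apply: eq_bigr => j _.
  by rewrite /x /y -!exprM -!exprD addnA.
have -> : \sum_(l < d) a *: 'X^(n + m * l) = a *: ('X^n * \sum_(l < d) x ^+ l).
  by rewrite mulr_sumr scaler_sumr; apply: eq_bigr => l _; rewrite /x -exprM -exprD.
rewrite -scalerAr !coefZ; congr (_ * _).
have y_m : y ^+ m = x ^+ d by rewrite /x /y -!exprM mulnC.
have -> : (1 - 'X^d) * ('X^n * ((\sum_(i < M) x ^+ i) * (\sum_(j < m) y ^+ j))) =
    'X^n * ((1 - x) * \sum_(i < M) x ^+ i) * \sum_(l < d) x ^+ l.
  rewrite -/y.
  transitivity ('X^n * (\sum_(i < M) x ^+ i) * ((1 - y) * \sum_(j < m) y ^+ j)).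
    by ring.
  by rewrite mul_one_sub_geom y_m -mul_one_sub_geom; ring.
rewrite mul_one_sub_geom mulrBr mulr1 mulrBl coefB.
have -> : 'X^n * x ^+ M = 'X^(n + m * M) :> {poly K} by rewrite /x -exprM -exprD.
by rewrite [X in _ - X]coefXnM ifT ?subr0 //; have := leq_pmull M m_gt0; lia.
Qed.

Lemma NOp_subst_identity (K : fieldType) (F : nat -> {poly K}) k N :
  F 0%N = 0 ->
  conv (1 - 'X^(k.+1)) (fun n => subst_pow (NOp F) k n - at_t0 F n) N =
  \sum_(l < k.+1) (subst_pow F l N - at_t0 F N).
Proof.
move=> F0; rewrite (@conv_ext _ _ _ (NOp_trunc F k N.+1)); last first.
  by move=> j le_jN; rewrite coef_NOp_trunc.
under [RHS]eq_bigr => l _ do rewrite (subst_pow_coef F0 l N).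
rewrite /NOp_trunc mulr_sumr coef_sum exchange_big; apply: eq_big_nat => n _.
rewrite mulr_sumr coef_sum [RHS]exchange_big; apply: eq_big_nat => m /andP[m_gt0 _].
rewrite coef_geom_double_sum // coef_sum; apply: eq_bigr => l _; exact: coef_ZXn.
Qed.

Theorem mainTheorem6 (K : fieldType) (F : nat -> {poly K}) :
  F 0%N = 0 -> very_nice F -> nice (NOp F).
Proof.
move=> F0 [niceF ratF0] k.
have nz_geom : 1 - 'X^(k.+1) != 0 :> {poly K}.
  apply/eqP => /(congr1 (fun p : {poly K} => p`_0)).
  by rewrite coefB coef1 coefXn /= subr0 coef0 => /eqP; rewrite oner_eq0.
have rat_rhs : rational_series (fun N => \sum_(l < k.+1) (subst_pow F l N - at_t0 F N)).
  by apply: (rat_sum (h := fun l N => subst_pow F l N - at_t0 F N)) => l;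
     apply: rat_sub.
have rat_diff : rational_series (fun N => subst_pow (NOp F) k N - at_t0 F N).
  apply: (rat_div nz_geom); apply: (rat_ext _ rat_rhs) => N.
  by rewrite NOp_subst_identity.
by apply: (rat_ext _ (rat_add rat_diff ratF0)) => N; rewrite subrK.
Qed.
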